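(* Let $N,M$ be normal subgroups of a group $G$, with $N$ abelian of finite exponent. (i) If $\exp(N)$ is odd, then $\exp(N\otimes M)$ divides $\exp(N)$. (ii) If $\exp(N)$ is even, then $\exp(N\otimes M)$ divides $2\exp(N)$.
   Context: Conventions: ${}^g h = ghg^{-1}$. For normal subgroups $N,M$ of $G$ acting on each other by conjugation, $N\otimes M$ is the group generated by symbols $n\otimes m$ ($n\in N$, $m\in M$) subject to $nn'\otimes m=({}^n n'\otimes {}^n m)(n\otimes m)$ and $n\otimes mm'=(n\otimes m)({}^m n\otimes {}^m m')$. *)

From Stdlib Require Import Arith List.
Import ListNotations.
Set Implicit Arguments.

Record group := Group {
  carrier :> Type;
  gmul : carrier -> carrier -> carrier;
  gone : carrier;
  ginv : carrier -> carrier;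
  gmulA : forall x y z, gmul x (gmul y z) = gmul (gmul x y) z;
  gmul1 : forall x, gmul gone x = x;
  gmulV : forall x, gmul (ginv x) x = gone
}.

Arguments gmul {g} _ _.
Arguments gone g : clear implicits.
Arguments ginv {g} _.

Section Groups.
Context {G : group}.

Definition conj (g h : G) : G := gmul (gmul g h) (ginv g).

Fixpoint gpow (x : G) (k : nat) : G :=
  match k with 0 => gone G | S k => gmul x (gpow x k) end.

Definition subgroup (H : G -> Prop) : Prop :=
  H (gone G) /\ (forall x y, H x -> H y -> H (gmul x y)) /\
  (forall x, H x -> H (ginv x)).

Definition normal (H : G -> Prop) : Prop :=
  subgroup H /\ forall g h, H h -> H (conj g h).

Definition abelian (H : G -> Prop) : Prop :=
  forall x y, H x -> H y -> gmul x y = gmul y x.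

Definition kills (H : G -> Prop) (k : nat) : Prop :=
  forall x, H x -> gpow x k = gone G.
Definition exponent (H : G -> Prop) (e : nat) : Prop :=
  0 < e /\ kills H e /\ forall k, 0 < k -> kills H k -> e <= k.

(* Words in the free group on the symbols n (x) m: a letter (true,(n,m)) is
   the generator n (x) m, a letter (false,(n,m)) is its formal inverse.
   Concatenation is the product. *)
Definition letter := (bool * (G * G))%type.
Definition word := list letter.
Definition gen (n m : G) : letter := (true, (n, m)).

Fixpoint wpow (w : word) (k : nat) : word :=
  match k with 0 => [] | S k => w ++ wpow w k end.

Definition good (N M : G -> Prop) (w : word) : Prop :=
  Forall (fun l : letter => N (fst (snd l)) /\ M (snd (snd l))) w.

(* The congruence presenting N (x) M: free group relations plus
   nn' (x) m = (^n n' (x) ^n m)(n (x) m) and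
   n (x) mm' = (n (x) m)(^m n (x) ^m m'). *)
Inductive tens_eq (N M : G -> Prop) : word -> word -> Prop :=
| te_refl w : tens_eq N M w w
| te_sym u v : tens_eq N M u v -> tens_eq N M v u
| te_trans u v w : tens_eq N M u v -> tens_eq N M v w -> tens_eq N M u w
| te_cat u u' v v' : tens_eq N M u u' -> tens_eq N M v v' ->
    tens_eq N M (u ++ v) (u' ++ v')
| te_invl x : tens_eq N M [(false, x); (true, x)] []
| te_invr x : tens_eq N M [(true, x); (false, x)] []
| te_rel1 n n' m : N n -> N n' -> M m ->
    tens_eq N M [gen (gmul n n') m] [gen (conj n n') (conj n m); gen n m]
| te_rel2 n m m' : N n -> M m -> M m' ->
    tens_eq N M [gen n (gmul m m')] [gen n m; gen (conj m n) (conj m m')].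

Definition tensor_exp_dvd (N M : G -> Prop) (d : nat) : Prop :=
  forall w, good N M w -> tens_eq N M (wpow w d) [].

End Groups.

(* The commutator map λ : N ⊗ M → G, n ⊗ m ↦ [n,m], respects the relations and
   satisfies t z t⁻¹ = ^{λ t} z, so its kernel is central.  Since N is abelian,
   λ takes values in N, so every commutator of N ⊗ M lies in the kernel: N ⊗ M
   has class at most 2 and (ab)^k = a^k b^k [b,a]^(k choose 2).  Moreover
   [b,a]^e = 1, because b a^e = a^e b [b,a]^e while a^e is central
   (λ(a^e) = λ(a)^e = 1).  So an exponent E with e | (E choose 2) kills N ⊗ M as
   soon as it kills the generators n ⊗ m.  Expanding 1 = n^e ⊗ m gives
   1 = (n ⊗ [n,m]^(e choose 2)) (n ⊗ m)^e; the first factor is trivial for e odd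
   and always squares to n ⊗ [n,m]^(e(e-1)) = 1. *)

From Stdlib Require Import Arith List Lia Setoid Morphisms.
Import ListNotations.

Arguments gmulA {g} x y z.
Arguments gmul1 {g} x.
Arguments gmulV {g} x.

Section GroupFacts.
Context {G : group}.
Implicit Types x y z h : G.

Lemma mulgV x : gmul x (ginv x) = gone G.
Proof.
  rewrite <- (gmul1 (gmul x (ginv x))), <- (gmulV (ginv x)) at 1.
  rewrite <- gmulA, (gmulA (ginv x) x), gmulV, gmul1. apply gmulV.
Qed.

Lemma mulg1 x : gmul x (gone G) = x.
Proof. rewrite <- (gmulV x), gmulA, mulgV, gmul1. reflexivity. Qed.

Lemma mulKg x y : gmul (ginv x) (gmul x y) = y.
Proof. rewrite gmulA, gmulV, gmul1. reflexivity. Qed.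

Lemma mulKVg x y : gmul x (gmul (ginv x) y) = y.
Proof. rewrite gmulA, mulgV, gmul1. reflexivity. Qed.

Lemma invg_unique x y : gmul x y = gone G -> ginv x = y.
Proof. intro Hxy. rewrite <- (mulg1 (ginv x)), <- Hxy, mulKg. reflexivity. Qed.

Lemma invgK x : ginv (ginv x) = x.
Proof. apply invg_unique, gmulV. Qed.

Lemma invgM x y : ginv (gmul x y) = gmul (ginv y) (ginv x).
Proof. apply invg_unique. rewrite <- gmulA, mulKVg, mulgV. reflexivity. Qed.

Lemma invg1 : ginv (gone G) = gone G.
Proof. apply invg_unique, gmul1. Qed.

End GroupFacts.

#[export] Hint Rewrite <- @gmulA : gsimpl.
#[export] Hint Rewrite @gmul1 @mulg1 @gmulV @mulgV @mulKg @mulKVg @invgK @invgM @invg1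
  : gsimpl.
Ltac group_eq := unfold conj; autorewrite with gsimpl; reflexivity.

Section ConjugationAndPowers.
Context {G : group}.
Implicit Types x y h a b : G.

Lemma conjgM x y h : conj (gmul x y) h = conj x (conj y h).
Proof. group_eq. Qed.

Lemma conj1g h : conj (gone G) h = h.
Proof. group_eq. Qed.

Lemma conjMg x a b : conj x (gmul a b) = gmul (conj x a) (conj x b).
Proof. group_eq. Qed.

Lemma conjJg x a b : conj x (conj a b) = conj (conj x a) (conj x b).
Proof. group_eq. Qed.

Lemma conj_fix x y : gmul x y = gmul y x -> conj x y = y.
Proof. intro Hxy. unfold conj. rewrite Hxy, <- gmulA, mulgV, mulg1. reflexivity. Qed.

Lemma gpowD x i j : gpow x (i + j) = gmul (gpow x i) (gpow x j).
Proof.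
  induction i as [|i IH]; simpl.
  - rewrite gmul1. reflexivity.
  - rewrite IH, gmulA. reflexivity.
Qed.

Lemma gpow1n k : gpow (gone G) k = gone G.
Proof. induction k as [|k IH]; simpl; [|rewrite IH, gmul1]; reflexivity. Qed.

Lemma gpowM x i j : gpow x (i * j) = gpow (gpow x i) j.
Proof.
  induction j as [|j IH]; simpl.
  - rewrite Nat.mul_0_r. reflexivity.
  - rewrite Nat.mul_succ_r, Nat.add_comm, gpowD, IH. reflexivity.
Qed.

Lemma gpowSr x k : gpow x (S k) = gmul (gpow x k) x.
Proof.
  induction k as [|k IH]; simpl in *.
  - rewrite gmul1, mulg1. reflexivity.
  - rewrite <- gmulA, <- IH. reflexivity.
Qed.

End ConjugationAndPowers.

Section NormalSubgroupFacts.
Context {G : group} (H : G -> Prop) (hH : normal H).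

Lemma normal1 : H (gone G).
Proof. apply hH. Qed.

Lemma normalM x y : H x -> H y -> H (gmul x y).
Proof. apply hH. Qed.

Lemma normalV x : H x -> H (ginv x).
Proof. apply hH. Qed.

Lemma normalJ g x : H x -> H (conj g x).
Proof. apply hH. Qed.

Lemma normal_gpow x k : H x -> H (gpow x k).
Proof. intro Hx. induction k; simpl; auto using normal1, normalM. Qed.

End NormalSubgroupFacts.

Ltac normal_closure :=
  match goal with
  | hH : normal ?H |- ?H _ =>
      first [ simple apply (normal1 _ hH) | simple apply (normalM _ hH)
            | simple apply (normalV _ hH) | simple apply (normalJ _ hH)
            | simple apply (normal_gpow _ hH) ]
  end.
#[export] Hint Extern 1 => normal_closure : grp.

Fixpoint choose2 (k : nat) : nat :=
  match k with 0 => 0 | S k => k + choose2 k end.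

Lemma double_choose2 k : 2 * choose2 k = k * (k - 1).
Proof. induction k as [|k IH]; simpl; [|destruct k; simpl in *]; nia. Qed.

Lemma dvd_choose2_odd k : Nat.Odd k -> Nat.divide k (choose2 k).
Proof. intros [q Hq]. exists q. pose proof (double_choose2 k). nia. Qed.

Lemma dvd_double_choose2 k : Nat.divide k (choose2 k + choose2 k).
Proof. exists (k - 1). pose proof (double_choose2 k). nia. Qed.

Lemma dvd_choose2_double k : Nat.divide k (choose2 (2 * k)).
Proof. exists (2 * k - 1). pose proof (double_choose2 (2 * k)). nia. Qed.

Section WordOperations.
Context {G : group}.
Implicit Types (x y n m : G) (l : @letter G) (u v w : @word G).

Definition linv l : letter := (negb (fst l), snd l).
Definition winv w : word := rev (map linv w).

Definition conjl x l : letter :=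
  (fst l, (conj x (fst (snd l)), conj x (snd (snd l)))).
Definition conjw x w : word := map (conjl x) w.

Definition commg n m : G := gmul (conj n m) (ginv m).

Definition lcomm l : G :=
  if fst l then commg (fst (snd l)) (snd (snd l))
  else ginv (commg (fst (snd l)) (snd (snd l))).
Definition wcomm w : G := fold_right (fun l g => gmul (lcomm l) g) (gone G) w.

Definition wcommg u v : word := winv u ++ winv v ++ u ++ v.

Lemma conjwM x y w : conjw (gmul x y) w = conjw x (conjw y w).
Proof.
  unfold conjw. rewrite map_map. apply map_ext.
  intros [b [n m]]. unfold conjl; simpl. rewrite !conjgM. reflexivity.
Qed.

Lemma conjw1 w : conjw (gone G) w = w.
Proof.
  unfold conjw. rewrite <- map_id. apply map_ext.
  intros [b [n m]]. unfold conjl; simpl. rewrite !conj1g. reflexivity.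
Qed.

Lemma wcomm_cat u v : wcomm (u ++ v) = gmul (wcomm u) (wcomm v).
Proof.
  induction u as [|l u IH]; simpl.
  - rewrite gmul1. reflexivity.
  - rewrite IH, gmulA. reflexivity.
Qed.

Lemma wcomm_winv w : wcomm (winv w) = ginv (wcomm w).
Proof.
  induction w as [|[[|] [n m]] w IH]; unfold winv in *; simpl.
  - rewrite invg1. reflexivity.
  - rewrite wcomm_cat, IH. unfold lcomm; simpl. group_eq.
  - rewrite wcomm_cat, IH. unfold lcomm; simpl. group_eq.
Qed.

Lemma wpowD w i j : wpow w (i + j) = wpow w i ++ wpow w j.
Proof. induction i as [|i IH]; simpl; [|rewrite IH, app_assoc]; reflexivity. Qed.

Lemma wpowSr w k : wpow w (S k) = wpow w k ++ w.
Proof.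
  induction k as [|k IH]; simpl in *.
  - rewrite app_nil_r. reflexivity.
  - rewrite <- app_assoc, <- IH. reflexivity.
Qed.

Lemma wpowM w i j : wpow w (i * j) = wpow (wpow w i) j.
Proof.
  induction j as [|j IH]; simpl.
  - rewrite Nat.mul_0_r. reflexivity.
  - rewrite Nat.mul_succ_r, Nat.add_comm, wpowD, IH. reflexivity.
Qed.

Lemma wpow_nil k : wpow (@nil (@letter G)) k = [].
Proof. induction k; simpl; auto. Qed.

Lemma wcomm_wpow w k : wcomm (wpow w k) = gpow (wcomm w) k.
Proof. induction k as [|k IH]; simpl; [|rewrite wcomm_cat, IH]; reflexivity. Qed.

End WordOperations.

Section TensorProduct.
Context {G : group} (N M : G -> Prop).
Implicit Types (x y n m : G) (l : @letter G) (a b t u v w z : @word G).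

Notation "u ~ v" := (tens_eq N M u v) (at level 70).

Instance tens_eq_Equivalence : Equivalence (tens_eq N M).
Proof. split; red; [apply te_refl | apply te_sym | apply te_trans]. Qed.

Instance app_tens_eq_Proper :
  Proper (tens_eq N M ==> tens_eq N M ==> tens_eq N M) (@app (@letter G)).
Proof. intros u u' Hu v v' Hv. apply te_cat; assumption. Qed.

Instance cons_tens_eq_Proper :
  Proper (eq ==> tens_eq N M ==> tens_eq N M) (@cons (@letter G)).
Proof.
  intros l _ <- v v' Hv.
  apply te_cat with (u := [l]) (u' := [l]); [reflexivity | assumption].
Qed.

Instance wpow_tens_eq_Proper : Proper (tens_eq N M ==> eq ==> tens_eq N M) (@wpow G).
Proof.
  intros u v Huv k _ <-.
  induction k as [|k IH]; simpl; [reflexivity | apply te_cat; assumption].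
Qed.

Lemma cat_linv_r l : [l] ++ [linv l] ~ [].
Proof. destruct l as [[|] p]; [apply te_invr | apply te_invl]. Qed.

Lemma cat_linv_l l : [linv l] ++ [l] ~ [].
Proof. destruct l as [[|] p]; [apply te_invl | apply te_invr]. Qed.

Lemma cat_winv_r w : w ++ winv w ~ [].
Proof.
  induction w as [|l w IH]; [reflexivity|].
  unfold winv in *; simpl. rewrite app_assoc, IH. apply cat_linv_r.
Qed.

Lemma cat_winv_l w : winv w ++ w ~ [].
Proof.
  induction w as [|l w IH]; [reflexivity|].
  unfold winv in *; simpl. rewrite <- app_assoc.
  change (rev (map linv w) ++ [linv l] ++ l :: w)
    with (rev (map linv w) ++ ([linv l] ++ [l]) ++ w).
  rewrite cat_linv_l. exact IH.
Qed.

Lemma tens_eq_cancel_l u v v' : u ++ v ~ u ++ v' -> v ~ v'.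
Proof.
  intro H. transitivity ((winv u ++ u) ++ v); [rewrite cat_winv_l; reflexivity|].
  rewrite <- app_assoc, H, app_assoc, cat_winv_l. reflexivity.
Qed.

Lemma tens_eq_cancel_r u v v' : v ++ u ~ v' ++ u -> v ~ v'.
Proof.
  intro H. transitivity (v ++ u ++ winv u); [rewrite cat_winv_r, app_nil_r; reflexivity|].
  rewrite app_assoc, H, <- app_assoc, cat_winv_r, app_nil_r. reflexivity.
Qed.

Lemma commute_winv_r u v v' : u ++ v ~ v' ++ u -> u ++ winv v ~ winv v' ++ u.
Proof.
  intro H. transitivity ((winv v' ++ v') ++ u ++ winv v).
  - rewrite cat_winv_l. reflexivity.
  - rewrite <- app_assoc, (app_assoc v'), <- H, <- app_assoc, cat_winv_r, app_nil_r.
    reflexivity.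
Qed.

Lemma commute_winv_l u v v' : u ++ v ~ v' ++ u -> winv u ++ v' ~ v ++ winv u.
Proof.
  intro H. transitivity (winv u ++ (v' ++ u) ++ winv u).
  - rewrite <- (app_assoc v'), cat_winv_r, app_nil_r. reflexivity.
  - rewrite <- H, (app_assoc (winv u) (u ++ v)), (app_assoc (winv u) u), cat_winv_l.
    reflexivity.
Qed.

Lemma wpow_winv_cat w k : wpow (winv w) k ++ wpow w k ~ [].
Proof.
  induction k as [|k IH]; [reflexivity|].
  rewrite wpowSr. change (wpow w (S k)) with (w ++ wpow w k).
  rewrite <- app_assoc, (app_assoc (winv w)), cat_winv_l. exact IH.
Qed.

Lemma cat_swap a b : b ++ a ~ a ++ b ++ wcommg b a.
Proof.
  unfold wcommg. rewrite (app_assoc b (winv b)), cat_winv_r. simpl.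
  rewrite (app_assoc a (winv a)), cat_winv_r. reflexivity.
Qed.

Lemma good_gen n m : N n -> M m -> good N M [gen n m].
Proof. intros Hn Hm. repeat constructor; assumption. Qed.

Lemma good_cat u v : good N M u -> good N M v -> good N M (u ++ v).
Proof. intros Hu Hv. apply Forall_app; split; assumption. Qed.

Lemma good_winv w : good N M w -> good N M (winv w).
Proof.
  intro Hw. apply Forall_rev, Forall_map.
  eapply Forall_impl; [|exact Hw]. intros [b [n m]]; simpl; auto.
Qed.

Lemma good_wpow w k : good N M w -> good N M (wpow w k).
Proof. intro Hw. induction k; simpl; [constructor | apply good_cat; assumption]. Qed.

Hint Resolve good_gen good_cat good_winv good_wpow : grp.

Section NormalSubgroups.
Hypothesis hN : normal N.
Hypothesis hM : normal M.

Lemma commg_inN n m : N n -> M m -> N (commg n m).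
Proof.
  intros Hn Hm. replace (commg n m) with (gmul n (conj m (ginv n)));
    [auto with grp | unfold commg; group_eq].
Qed.

Lemma commg_inM n m : N n -> M m -> M (commg n m).
Proof. intros Hn Hm. unfold commg. auto with grp. Qed.

Hint Resolve commg_inN commg_inM : grp.

Lemma wcomm_inN w : good N M w -> N (wcomm w).
Proof.
  induction 1 as [|[[|] [n m]] w [Hn Hm] Hw IH]; simpl in *; unfold lcomm; simpl;
    auto with grp.
Qed.

Lemma good_conjw x w : good N M w -> good N M (conjw x w).
Proof.
  intro Hw. apply Forall_map.
  eapply Forall_impl; [|exact Hw]. intros [b [n m]] [Hn Hm]; simpl; auto with grp.
Qed.

Hint Resolve good_conjw : grp.

Lemma gen_mull n n' m : N n -> N n' -> M m ->
  [gen (gmul n n') m] ~ [gen (conj n n') (conj n m)] ++ [gen n m].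
Proof. apply te_rel1. Qed.

Lemma gen_mulr n m m' : N n -> M m -> M m' ->
  [gen n (gmul m m')] ~ [gen n m] ++ [gen (conj m n) (conj m m')].
Proof. apply te_rel2. Qed.

Lemma gen1l m : M m -> [gen (gone G) m] ~ [].
Proof.
  intro Hm. apply (tens_eq_cancel_r [gen (gone G) m]).
  pose proof (gen_mull (gone G) (gone G) m) as H.
  rewrite gmul1, !conj1g in H. symmetry. apply H; auto with grp.
Qed.

Lemma gen1r n : N n -> [gen n (gone G)] ~ [].
Proof.
  intro Hn. apply (tens_eq_cancel_r [gen n (gone G)]).
  pose proof (gen_mulr n (gone G) (gone G)) as H.
  rewrite gmul1, !conj1g in H. symmetry. apply H; auto with grp.
Qed.

(* Expand (n n') ⊗ (m m') with the two defining relations in both orders. *)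
Lemma gen_conj_swap n n' m m' : N n -> N n' -> M m -> M m' ->
  [gen (conj (gmul n m) n') (conj (gmul n m) m')] ++ [gen n m] ~
  [gen n m] ++ [gen (conj (gmul m n) n') (conj (gmul m n) m')].
Proof.
  intros Hn Hn' Hm Hm'.
  assert (Hl : [gen (gmul n n') (gmul m m')] ~
    [gen (conj n n') (conj n m)] ++
    ([gen (conj (gmul n m) n') (conj (gmul n m) m')] ++ [gen n m]) ++
    [gen (conj m n) (conj m m')]).
  { rewrite gen_mull, conjMg, gen_mulr, (gen_mulr n m m') by auto with grp.
    rewrite <- !conjJg, <- !conjgM, <- !app_assoc. reflexivity. }
  assert (Hr : [gen (gmul n n') (gmul m m')] ~
    [gen (conj n n') (conj n m)] ++
    ([gen n m] ++ [gen (conj (gmul m n) n') (conj (gmul m n) m')]) ++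
    [gen (conj m n) (conj m m')]).
  { rewrite gen_mulr, conjMg, gen_mull, (gen_mull (conj m n)) by auto with grp.
    rewrite <- !conjJg, <- !conjgM, <- !app_assoc. reflexivity. }
  rewrite Hl in Hr.
  apply tens_eq_cancel_l in Hr. apply tens_eq_cancel_r in Hr. exact Hr.
Qed.

Lemma gen_commute_gen n m n' m' : N n -> M m -> N n' -> M m' ->
  [gen n m] ++ [gen n' m'] ~
  [gen (conj (commg n m) n') (conj (commg n m) m')] ++ [gen n m].
Proof.
  intros Hn Hm Hn' Hm'.
  set (y := ginv (gmul m n)).
  assert (Hmn : forall h, conj (gmul m n) (conj y h) = h) by (intro; unfold y; group_eq).
  assert (Hnm : forall h, conj (gmul n m) (conj y h) = conj (commg n m) h)
    by (intro; unfold y, commg; group_eq).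
  pose proof (gen_conj_swap n (conj y n') m (conj y m')) as H.
  rewrite !Hmn, !Hnm in H. symmetry. apply H; auto with grp.
Qed.

Lemma gen_commute_letter n m l : N n -> M m -> N (fst (snd l)) -> M (snd (snd l)) ->
  [gen n m] ++ [l] ~ [conjl (commg n m) l] ++ [gen n m].
Proof.
  destruct l as [[|] [n' m']]; intros Hn Hm Hn' Hm'; simpl in Hn', Hm'.
  - apply gen_commute_gen; assumption.
  - apply (commute_winv_r [gen n m] [gen n' m']
             [gen (conj (commg n m) n') (conj (commg n m) m')]).
    apply gen_commute_gen; assumption.
Qed.

Lemma gen_commute n m z : N n -> M m -> good N M z ->
  [gen n m] ++ z ~ conjw (commg n m) z ++ [gen n m].
Proof.
  intros Hn Hm Hz. induction Hz as [|l z [Hl1 Hl2] Hz IH]; [reflexivity|].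
  change (l :: z) with ([l] ++ z).
  rewrite app_assoc, gen_commute_letter, <- app_assoc, IH by assumption. reflexivity.
Qed.

Lemma letter_commute l z : N (fst (snd l)) -> M (snd (snd l)) -> good N M z ->
  [l] ++ z ~ conjw (lcomm l) z ++ [l].
Proof.
  destruct l as [[|] [n m]]; intros Hn Hm Hz; simpl in Hn, Hm.
  - apply gen_commute; assumption.
  - apply (commute_winv_l [gen n m] (conjw (ginv (commg n m)) z) z).
    rewrite gen_commute, <- conjwM, mulgV, conjw1 by auto with grp. reflexivity.
Qed.

Lemma word_commute t z : good N M t -> good N M z ->
  t ++ z ~ conjw (wcomm t) z ++ t.
Proof.
  intros Ht Hz. induction Ht as [|l t [Hl1 Hl2] Ht IH]; simpl.
  - rewrite conjw1, app_nil_r. reflexivity.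
  - change (l :: t ++ z) with ([l] ++ t ++ z).
    rewrite IH, app_assoc, letter_commute, conjwM, <- app_assoc by auto with grp.
    reflexivity.
Qed.

Lemma central_of_wcomm1 t z : good N M t -> good N M z -> wcomm t = gone G ->
  t ++ z ~ z ++ t.
Proof.
  intros Ht Hz Ht1. rewrite word_commute, Ht1, conjw1 by assumption. reflexivity.
Qed.

Section AbelianN.
Hypothesis hA : abelian N.

Lemma wcomm_wcommg a b : good N M a -> good N M b -> wcomm (wcommg a b) = gone G.
Proof.
  intros Ha Hb. unfold wcommg.
  rewrite !wcomm_cat, !wcomm_winv, (hA _ _ (wcomm_inN a Ha) (wcomm_inN b Hb)).
  group_eq.
Qed.

Lemma wcommg_central a b z : good N M a -> good N M b -> good N M z ->
  wcommg a b ++ z ~ z ++ wcommg a b.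
Proof.
  intros Ha Hb Hz. apply central_of_wcomm1; [unfold wcommg; auto with grp | assumption |].
  apply wcomm_wcommg; assumption.
Qed.

Lemma wpow_wcommg_central a b z k : good N M a -> good N M b -> good N M z ->
  wpow (wcommg a b) k ++ z ~ z ++ wpow (wcommg a b) k.
Proof.
  intros Ha Hb Hz. apply central_of_wcomm1; [unfold wcommg; auto with grp | assumption |].
  rewrite wcomm_wpow, wcomm_wcommg by assumption. apply gpow1n.
Qed.

Lemma cat_wpow_swap a b k : good N M a -> good N M b ->
  b ++ wpow a k ~ wpow a k ++ b ++ wpow (wcommg b a) k.
Proof.
  intros Ha Hb. induction k as [|k IH]; simpl.
  - rewrite !app_nil_r. reflexivity.
  - rewrite (app_assoc b a), (cat_swap a b), <- !app_assoc.
    rewrite (wcommg_central b a (wpow a k)) by auto with grp.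
    rewrite (app_assoc b (wpow a k)), IH, <- !app_assoc, <- wpowSr. reflexivity.
Qed.

Lemma wpow_cat a b k : good N M a -> good N M b ->
  wpow (a ++ b) k ~ wpow a k ++ wpow b k ++ wpow (wcommg b a) (choose2 k).
Proof.
  intros Ha Hb. induction k as [|k IH]; simpl; [reflexivity|].
  rewrite IH, wpowD, <- !app_assoc.
  rewrite (app_assoc b (wpow a k)), cat_wpow_swap, <- !app_assoc by assumption.
  rewrite (app_assoc (wpow (wcommg b a) k) (wpow b k)), wpow_wcommg_central, <- !app_assoc
    by auto with grp.
  reflexivity.
Qed.

Lemma gen_catr n d d' : N n -> N d -> M d -> N d' -> M d' ->
  [gen n d] ++ [gen n d'] ~ [gen n (gmul d d')].
Proof.
  intros Hn HdN HdM Hd'N Hd'M.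
  rewrite gen_mulr, (conj_fix d n), (conj_fix d d') by auto. reflexivity.
Qed.

Lemma commg_gpowl n m j : N n -> M m -> commg (gpow n j) m = gpow (commg n m) j.
Proof.
  intros Hn Hm. induction j as [|j IH]; simpl.
  - unfold commg. group_eq.
  - replace (commg (gmul n (gpow n j)) m)
      with (gmul (conj n (commg (gpow n j) m)) (commg n m)) by (unfold commg; group_eq).
    rewrite (conj_fix n), IH, <- gpowSr by (apply hA; auto with grp). reflexivity.
Qed.

Lemma gen_gpowS n m k : N n -> M m ->
  [gen (gpow n (S k)) m] ~
  [gen n (commg (gpow n k) m)] ++ [gen (gpow n k) m] ++ [gen n m].
Proof.
  intros Hn Hm. simpl.
  rewrite (hA n (gpow n k)), gen_mull, (conj_fix (gpow n k) n) by auto with grp.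
  replace (conj (gpow n k) m) with (gmul (commg (gpow n k) m) m)
    by (unfold commg; group_eq).
  rewrite gen_mulr, <- app_assoc, <- gen_commute_gen by auto with grp. reflexivity.
Qed.

Lemma gen_gpowl n m k : N n -> M m ->
  [gen (gpow n k) m] ~ [gen n (gpow (commg n m) (choose2 k))] ++ wpow [gen n m] k.
Proof.
  intros Hn Hm. induction k as [|k IH].
  - simpl. rewrite gen1l, gen1r by auto with grp. reflexivity.
  - rewrite gen_gpowS, IH, commg_gpowl, <- !app_assoc, (app_assoc [gen n _]), gen_catr,
      <- gpowD, <- wpowSr by auto with grp.
    reflexivity.
Qed.

Section Exponent.
Variable e : nat.
Hypothesis he : kills N e.

Lemma wpow_wcommg_exp a b : good N M a -> good N M b -> wpow (wcommg b a) e ~ [].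
Proof.
  intros Ha Hb. apply (tens_eq_cancel_l (wpow a e ++ b)).
  rewrite app_nil_r, <- app_assoc, <- cat_wpow_swap by assumption.
  symmetry. apply central_of_wcomm1; auto with grp.
  rewrite wcomm_wpow. apply he, wcomm_inN; assumption.
Qed.

Lemma gen_gpow_commg_trivial n m k : N n -> M m -> Nat.divide e k ->
  [gen n (gpow (commg n m) k)] ~ [].
Proof.
  intros Hn Hm [q ->]. rewrite Nat.mul_comm, gpowM, he, gpow1n by auto with grp.
  apply gen1r; assumption.
Qed.

Lemma gen_wpow_exp n m : N n -> M m ->
  [gen n (gpow (commg n m) (choose2 e))] ++ wpow [gen n m] e ~ [].
Proof. intros Hn Hm. rewrite <- gen_gpowl, he by assumption. apply gen1l; assumption. Qed.

Lemma gen_wpow_odd n m : N n -> M m -> Nat.Odd e -> wpow [gen n m] e ~ [].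
Proof.
  intros Hn Hm He.
  transitivity ([gen n (gpow (commg n m) (choose2 e))] ++ wpow [gen n m] e).
  - rewrite gen_gpow_commg_trivial by auto using dvd_choose2_odd. reflexivity.
  - apply gen_wpow_exp; assumption.
Qed.

(* n ⊗ [n,m]^(e choose 2) is the inverse of (n ⊗ m)^e and squares to 1. *)
Lemma gen_wpow_double n m : N n -> M m -> wpow [gen n m] (2 * e) ~ [].
Proof.
  intros Hn Hm.
  set (P := [gen n (gpow (commg n m) (choose2 e))]).
  set (W := wpow [gen n m] e).
  assert (HPW : P ++ W ~ []) by (apply gen_wpow_exp; assumption).
  assert (HPP : P ++ P ~ []).
  { unfold P. rewrite gen_catr, <- gpowD by auto with grp.
    apply gen_gpow_commg_trivial; auto using dvd_double_choose2. }
  replace (2 * e) with (e + e) by lia. rewrite wpowD. fold W.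
  transitivity ((P ++ P) ++ W ++ W); [rewrite HPP; reflexivity|].
  rewrite <- app_assoc, (app_assoc P W), HPW. exact HPW.
Qed.

Lemma tensor_exp_dvd_of_gens E :
  (forall n m, N n -> M m -> wpow [gen n m] E ~ []) ->
  Nat.divide e (choose2 E) -> tensor_exp_dvd N M E.
Proof.
  intros Hgen [q Hq] w Hw. induction Hw as [|l w [Hl1 Hl2] Hw IH].
  - rewrite wpow_nil. reflexivity.
  - change (l :: w) with ([l] ++ w).
    assert (Hl : good N M [l]) by (repeat constructor; assumption).
    rewrite wpow_cat, IH, Hq, (Nat.mul_comm q e), wpowM, wpow_wcommg_exp, wpow_nil,
      !app_nil_r by assumption.
    destruct l as [[|] [n m]]; simpl in Hl1, Hl2.
    + apply Hgen; assumption.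
    + transitivity (wpow (winv [gen n m]) E ++ wpow [gen n m] E).
      * rewrite Hgen, app_nil_r by assumption. reflexivity.
      * apply wpow_winv_cat.
Qed.

End Exponent.
End AbelianN.
End NormalSubgroups.
End TensorProduct.

Theorem lemma4p2 (G : group) (N M : G -> Prop) (e : nat) :
  normal N -> normal M -> abelian N -> exponent N e ->
  (Nat.Odd e -> tensor_exp_dvd N M e) /\
  (Nat.Even e -> tensor_exp_dvd N M (2 * e)).
Proof.
  intros hN hM hA [_ [he _]]. split; [intro Hodd | intros _].
  - apply (tensor_exp_dvd_of_gens N M hN hM hA e he).
    + intros n m Hn Hm. apply gen_wpow_odd; assumption.
    + apply dvd_choose2_odd, Hodd.
  - apply (tensor_exp_dvd_of_gens N M hN hM hA e he).
    + intros n m Hn Hm. apply gen_wpow_double; assumption.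
    + apply dvd_choose2_double.
Qed.
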